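(* Let $F=\begin{pmatrix}1&0&-1\\0&0&0\\-1&0&1\end{pmatrix}$ (edge detect A filter). Then the equation $F*X=B$ with the zero boundary condition, for unknown $X\in\mathbb{R}^{m\times n}$, has a unique solution for every $B\in\mathbb{R}^{m\times n}$ if and only if $m,n\notin\{2l-1: l\in\mathbb{N}\}$.
   Context: $\mathbb{N}=\{1,2,3,\dots\}$. For $F=[f_{ij}]\in\mathbb{R}^{3\times3}$ and $X=[x_{ij}]\in\mathbb{R}^{m\times n}$, the convolution $F*X\in\mathbb{R}^{m\times n}$ is defined by $[F*X]_{ij}=\sum_{l_1=1}^3\sum_{l_2=1}^3 f_{l_1l_2}\,x_{i-l_1+2,\,j-l_2+2}$ for $1\le i\le m$, $1\le j\le n$, where under the zero boundary condition all values $x_{ij}$ with $i\in\{0,m+1\}$ or $j\in\{0,n+1\}$ are $0$. *)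

From HB Require Import structures.
From mathcomp Require Import all_boot all_order all_algebra.
Set Implicit Arguments. Unset Strict Implicit. Unset Printing Implicit Defensive.
Import Order.TTheory GRing.Theory Num.Theory.
Local Open Scope ring_scope.

(* Indices are 0-based ('I_m), paper's indices are 1-based.
   zero-boundary extension: entry (a, b) of X for integer (0-based) indices,
   0 when outside 0 <= a < m, 0 <= b < n. *)
Definition zext (R : ringType) (m n : nat) (X : 'M[R]_(m, n)) (a b : int) : R :=
  match a, b with
  | Posz a', Posz b' =>
      (if insub a' : option 'I_m is Some i then
         if insub b' : option 'I_n is Some j then X i j else 0
       else 0)
  | _, _ => 0
  end.

(* [F*X]_{ij} = sum_{l1,l2} f_{l1 l2} x_{i-l1+2, j-l2+2} (1-based), i.e.
   with 0-based i, j, l1, l2: x_{i-l1+1, j-l2+1}. *)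
Definition conv3 (R : ringType) (m n : nat) (F : 'M[R]_3) (X : 'M[R]_(m, n))
  : 'M[R]_(m, n) :=
  \matrix_(i < m, j < n)
    \sum_(l1 < 3) \sum_(l2 < 3)
      F l1 l2 * zext X (i%:Z - l1%:Z + 1) (j%:Z - l2%:Z + 1).

Definition edgeA (R : ringType) : 'M[R]_3 :=
  \matrix_(i < 3, j < 3)
    (if (i == 0%N :> nat) && (j == 0%N :> nat) then 1
     else if (i == 0%N :> nat) && (j == 2%N :> nat) then -1
     else if (i == 2%N :> nat) && (j == 0%N :> nat) then -1
     else if (i == 2%N :> nat) && (j == 2%N :> nat) then 1
     else 0).

From HB Require Import structures.
From mathcomp Require Import all_boot all_order all_algebra.
From mathcomp Require Import reals.
From mathcomp Require Import zify ring.
Import Order.TTheory GRing.Theory Num.Theory.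
Set Implicit Arguments. Unset Strict Implicit. Unset Printing Implicit Defensive.
Local Open Scope ring_scope.

(* The edge detect A filter is the outer product of the stencil (1, 0, -1)
   with itself, so with zero boundary F * X = D_m X D_n^T, where D_k is the
   k x k central difference matrix, (D_k v)_i = v_(i+1) - v_(i-1).  Hence the
   equation is uniquely solvable for every B iff D_m and D_n are invertible.
   A kernel vector of D_k (indices 0..k-1, extended by zero) satisfies
   v_(i+1) = v_(i-1), so it is 2-periodic between the zeros v_(-1) and v_k:
   its odd entries vanish, and when k is even so do its even ones.  For odd k
   the vector (1, 0, 1, ..., 0, 1) lies in the kernel. *)

Definition zext1 (R : nzRingType) k (f : 'I_k -> R) (a : int) : R :=
  if a is Posz a' then (if insub a' : option 'I_k is Some i then f i else 0) else 0.

Lemma zextE (R : nzRingType) m n (X : 'M[R]_(m, n)) a b :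
  zext X a b = zext1 (fun i => zext1 (X i) b) a.
Proof. by case: a b => [a|a] [b|b] //=; case: (insub a). Qed.

Lemma zext1B (R : nzRingType) k (f g : 'I_k -> R) a :
  zext1 (fun i => f i - g i) a = zext1 f a - zext1 g a.
Proof. by case: a => [a|a] /=; rewrite ?subr0 //; case: (insub a); rewrite ?subr0. Qed.

Lemma zext1_nat (R : nzRingType) k (f : 'I_k -> R) (a : nat) :
  zext1 f (Posz a) = if insub a is Some i then f i else 0.
Proof. by []. Qed.

Lemma zext1_ord (R : nzRingType) k (f : 'I_k -> R) (i : 'I_k) : zext1 f (Posz i) = f i.
Proof. by rewrite /= valK. Qed.

Lemma zext1_out (R : nzRingType) k (f : 'I_k -> R) (a : nat) :
  (k <= a)%N -> zext1 f (Posz a) = 0.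
Proof. by move=> ka; rewrite /= insubN // -leqNgt. Qed.

Lemma sum_nat_delta (R : nzRingType) k (f : 'I_k -> R) (a : nat) :
  \sum_(i < k) (i == a :> nat)%:R * f i = zext1 f (Posz a).
Proof.
rewrite zext1_nat; case: insubP => [i0 _ <-| ka].
  rewrite (bigD1 i0) //= eqxx mul1r big1 ?addr0 // => i /negbTE.
  by rewrite -val_eqE => ->; rewrite mul0r.
rewrite big1 // => i _; suff /negbTE-> : (i != a :> nat) by rewrite mul0r.
by apply: contra ka => /eqP <-.
Qed.

Arguments zext1 : simpl never.

Definition diffmx (R : nzRingType) k : 'M[R]_k :=
  \matrix_(i, j) ((j == i.+1 :> nat)%:R - (i == j.+1 :> nat)%:R).

Lemma sum_diffmx (R : nzRingType) k (i : 'I_k) (f : 'I_k -> R) :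
  \sum_j diffmx R k i j * f j = zext1 f (i%:Z + 1) - zext1 f (i%:Z - 1).
Proof.
under eq_bigr => j _ do rewrite mxE mulrBl.
rewrite sumrB sum_nat_delta -addn1 PoszD; congr (_ - _).
case: i => [[|i] /= _].
  by rewrite big1 // => j _; rewrite mul0r.
rewrite -addn1 PoszD addrK -sum_nat_delta; apply: eq_bigr => j _.
by rewrite addn1 eqSS eq_sym.
Qed.

Lemma eq_zext1 (R : nzRingType) k (f g : 'I_k -> R) : f =1 g -> zext1 f =1 zext1 g.
Proof. by move=> fg [a|a] //; rewrite !zext1_nat; case: insub. Qed.

Lemma mul_diffmx (R : nzRingType) k n (M : 'M[R]_(k, n)) i j :
  (diffmx R k *m M) i j =
    zext1 (fun a => M a j) (i%:Z + 1) - zext1 (fun a => M a j) (i%:Z - 1).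
Proof. by rewrite mxE sum_diffmx. Qed.

Lemma mul_diffmx_tr (R : comNzRingType) m k (M : 'M[R]_(m, k)) i j :
  (M *m (diffmx R k)^T) i j = zext1 (M i) (j%:Z + 1) - zext1 (M i) (j%:Z - 1).
Proof. by rewrite mxE -sum_diffmx; apply: eq_bigr => a _; rewrite mxE mulrC. Qed.

Lemma conv3_edgeA (R : comNzRingType) m n (X : 'M[R]_(m, n)) :
  conv3 (edgeA R) X = diffmx R m *m X *m (diffmx R n)^T.
Proof.
apply/matrixP => i j; rewrite -mulmxA mul_diffmx.
rewrite !(eq_zext1 (fun a => mul_diffmx_tr X a j)) !zext1B.
rewrite mxE !big_ord_recl !big_ord0 !zextE !mxE /=.
have E0 (x : int) : x - 0 + 1 = x + 1 by lia.
have E1 (x : int) : x - 1 + 1 = x by lia.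
have E2 (x : int) : x - 2 + 1 = x - 1 by lia.
rewrite !(E0, E1, E2, mul1r, mul0r, mulN1r, add0r, addr0); ring.
Qed.

Lemma period2_shift (T : Type) (w : nat -> T) k :
  (forall j, (j.+2 <= k)%N -> w j.+2 = w j) ->
  forall j t, (j + 2 * t <= k)%N -> w (j + 2 * t)%N = w j.
Proof.
move=> step j; elim=> [|t IH] le_k; first by rewrite muln0 addn0.
rewrite (_ : j + 2 * t.+1 = (j + 2 * t).+2)%N ?step ?IH //; lia.
Qed.

Section DiffKernel.

Variables (R : nzRingType) (k : nat).

Definition diff_ker (f : 'I_k -> R) :=
  forall i : 'I_k, zext1 f (i%:Z + 1) = zext1 f (i%:Z - 1).

Lemma diff_ker_even (f : 'I_k -> R) : ~~ odd k -> diff_ker f -> forall i, f i = 0.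
Proof.
move=> k_even ker_f i; pose w a := zext1 f (Posz a).
have w_out a : (k <= a)%N -> w a = 0 by apply: zext1_out.
have w_step j : (j.+2 <= k)%N -> w j.+2 = w j.
  move=> lt_jk; have := ker_f (Ordinal lt_jk); rewrite /=.
  have -> : Posz j.+1 + 1 = Posz j.+2 by lia.
  by have -> : Posz j.+1 - 1 = Posz j by lia.
have w1 : w 1%N = 0.
  have [k0 | k_gt0] := posnP k; first by apply: w_out; rewrite k0.
  by have := ker_f (Ordinal k_gt0).
rewrite -(zext1_ord f i) -/(w i); have lt_ik := ltn_ord i.
have [i_odd | i_even] := boolP (odd i).
  have -> : nat_of_ord i = (1 + 2 * i./2)%N by have := odd_double_half i; rewrite i_odd; lia.
  by rewrite (period2_shift w_step) //; lia.
have ki_even : ~~ odd (k - i) by rewrite oddB ?(ltnW lt_ik) // (negbTE k_even) (negbTE i_even).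
have Ei : k = (i + 2 * (k - i)./2)%N.
  by have := odd_double_half (k - i); rewrite (negbTE ki_even); lia.
by rewrite -(period2_shift w_step (t := (k - i)./2)) -Ei ?w_out.
Qed.

Definition alt_vec : 'I_k -> R := fun i => (~~ odd i)%:R.

Lemma diff_ker_alt : odd k -> diff_ker alt_vec.
Proof.
move=> k_odd [i lt_ik] /=.
have altE a : zext1 alt_vec (Posz a) = ((a < k)%N && ~~ odd a)%:R.
  by rewrite zext1_nat; case: insubP => [a' -> <-|/negbTE->].
have -> : Posz i + 1 = Posz i.+1 by lia.
case: i lt_ik => [|i] lt_ik; first by rewrite altE andbF.
have -> : Posz i.+1 - 1 = Posz i by lia.
rewrite !altE !oddS negbK (ltnW lt_ik).
case: (boolP (odd i)) => [_ | i_even]; first by rewrite !andbF.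
suff -> : (i.+2 < k)%N by [].
rewrite ltn_neqAle lt_ik andbT; apply: contraTneq k_odd => <-.
by rewrite !oddS negbK.
Qed.

End DiffKernel.

Lemma mul_diffmx_tr_eq0 (R : comNzRingType) k (u : 'rV[R]_k) :
  u *m (diffmx R k)^T = 0 <-> diff_ker (u 0).
Proof.
split=> [/matrixP uD j | uD].
  by apply/eqP; rewrite -subr_eq0 -mul_diffmx_tr uD mxE.
by apply/matrixP => i j; rewrite ord1 mul_diffmx_tr uD subrr mxE.
Qed.

Lemma diffmx_unit (R : fieldType) k : (diffmx R k \in unitmx) = ~~ odd k.
Proof.
rewrite -unitmx_tr unitmxE unitfE.
have [k_odd | k_even] := boolP (odd k).
  apply/negbTE; rewrite negbK; apply/det0P.
  exists (\row_i alt_vec R i).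
    apply/eqP => /matrixP /(_ 0 (Ordinal (odd_gt0 k_odd))); rewrite !mxE /=.
    by move/eqP; rewrite oner_eq0.
  apply/mul_diffmx_tr_eq0 => j; rewrite !(eq_zext1 (fun i => mxE _ _ _ _)).
  exact: diff_ker_alt.
apply/negP => /det0P [u /negP u_neq0 /mul_diffmx_tr_eq0 uD]; apply: u_neq0.
by apply/eqP/rowP => j; rewrite mxE (diff_ker_even k_even uD).
Qed.

Lemma eq_uniq_solvable (T U : Type) (f g : T -> U) : f =1 g ->
  (forall b, exists! x, f x = b) <-> (forall b, exists! x, g x = b).
Proof.
move=> fg; split=> solvable b; have [x [xb x_uniq]] := solvable b; exists x.
  by split=> [|y yb]; [rewrite -fg | apply: x_uniq; rewrite fg].
by split=> [|y yb]; [rewrite fg | apply: x_uniq; rewrite -fg].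
Qed.

Lemma uniq_solvable_mulmx_lr (R : fieldType) m n (A : 'M[R]_m) (C : 'M[R]_n) :
  (0 < m)%N -> (0 < n)%N ->
  (forall B, exists! X, A *m X *m C = B) <-> (A \in unitmx) && (C \in unitmx).
Proof.
move=> m_gt0 n_gt0; split=> [solvable | /andP [uA uC] B]; last first.
  exists (invmx A *m B *m invmx C); split=> [|X <-].
    by rewrite !mulmxA mulmxV // mul1mx mulmxKV.
  by rewrite !mulmxA mulVmx // mul1mx mulmxK.
have inj X : A *m X *m C = 0 -> X = 0.
  have [X0 [_ uniq0]] := solvable 0.
  by move=> /uniq0 <-; apply: uniq0; rewrite mulmx0 mul0mx.
apply/andP; split; [rewrite -unitmx_tr|]; rewrite unitmxE unitfE;
  apply/negP => /det0P [v /negP v_neq0 vM]; apply: v_neq0; apply/eqP/rowP => i.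
  have /matrixP /(_ i (Ordinal n_gt0)) : v^T *m const_mx 1 = 0 :> 'M_(m, n).
    by apply: inj; rewrite mulmxA -[A]trmxK -trmx_mul vM trmx0 !mul0mx.
  by rewrite mxE big_ord1 !mxE mulr1.
have /matrixP /(_ (Ordinal m_gt0) i) : const_mx 1 *m v = 0 :> 'M_(m, n).
  by apply: inj; rewrite -!mulmxA vM !mulmx0.
by rewrite mxE big_ord1 !mxE mul1r.
Qed.

Lemma odd_exists_double_sub1 m : (exists l, (0 < l)%N /\ m = (2 * l - 1)%N) <-> odd m.
Proof.
split=> [[l [l_gt0 ->]] | m_odd].
  by rewrite (_ : (2 * l - 1 = (2 * l.-1).+1)%N) ?oddS ?odd_double //; lia.
by exists m.+1./2; have := odd_double_half m; rewrite m_odd; lia.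
Qed.

Theorem corollary7 (R : realType) (m n : nat) (hm : (0 < m)%N) (hn : (0 < n)%N) :
  (forall B : 'M[R]_(m, n), exists! X : 'M[R]_(m, n), conv3 (edgeA R) X = B)
  <-> (~ (exists l : nat, (0 < l)%N /\ m = (2 * l - 1)%N) /\
       ~ (exists l : nat, (0 < l)%N /\ n = (2 * l - 1)%N)).
Proof.
rewrite !odd_exists_double_sub1 (eq_uniq_solvable (@conv3_edgeA R m n)).
rewrite uniq_solvable_mulmx_lr // unitmx_tr !diffmx_unit.
by rewrite -(rwP andP) -!(rwP negP).
Qed.
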